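(* Let $X\in\mathbb{R}^{n\times D}$ and $Y\in\mathbb{R}^{n\times m}$ with $D>n\geq r:=\mathrm{rank}(X)$, and let $h\ge\min\{m,D\}$ be a positive integer. Write the compact SVD $X=W\begin{bmatrix}\Sigma_x^{1/2} & 0\end{bmatrix}\begin{bmatrix}\Phi_1^T\\ \Phi_2^T\end{bmatrix}$ with $W\in\mathbb{R}^{n\times r}$ having orthonormal columns, $\Sigma_x\in\mathbb{R}^{r\times r}$ diagonal with positive diagonal, $\Phi_1\in\mathbb{R}^{D\times r}$, $\Phi_2\in\mathbb{R}^{D\times(D-r)}$, $[\Phi_1\ \Phi_2]$ orthogonal. Let $E(V,U_1)=W^TY-\Sigma_x^{1/2}U_1V^T$ and let $(V(t),U_1(t),U_2(t))\in\mathbb{R}^{m\times h}\times\mathbb{R}^{r\times h}\times\mathbb{R}^{(D-r)\times h}$, $t\ge0$, solve $$\dot V=E^T\Sigma_x^{1/2}U_1,\qquad \dot U_1=\Sigma_x^{1/2}EV,\qquad \dot U_2=0,$$ with $E=E(V(t),U_1(t))$, starting from some $(V(0),U_1(0),U_2(0))$. Let $U(t)=\Phi_1U_1(t)+\Phi_2U_2(t)$. Assume that $(V(t),U_1(t))$ converges as $t\to\infty$ to some equilibrium point $(V(\infty),U_1(\infty))$ with $E(V(\infty),U_1(\infty))=0$, and set $U(\infty)=\Phi_1U_1(\infty)+\Phi_2U_2(0)$. If the initialization satisfies $$V(0)U_2(0)^T=0,\qquad U_1(0)U_2(0)^T=0,$$ then $U(\infty)V(\infty)^T=\hat\Theta$,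 where $\hat\Theta=X^T(XX^T)^\dagger Y$.
   Context: The dynamics above are the gradient flow of $\mathcal{L}(V,U)=\frac12\|Y-XUV^T\|_F^2$ written in coordinates $U=\Phi_1U_1+\Phi_2U_2$. $(\cdot)^\dagger$ denotes the Moore–Penrose pseudoinverse; $\hat\Theta$ is the minimum-norm solution of $\min_{\Theta}\|Y-X\Theta\|_F^2$. *)

(* R : realType, matrices 'M[R]_(m,n) carry the
   normed-module structure of matrix_normedtype (entrywise max norm). *)
From HB Require Import structures.
From mathcomp Require Import all_boot all_order all_algebra.
From mathcomp Require Import all_classical all_reals all_analysis.
Set Implicit Arguments. Unset Strict Implicit. Unset Printing Implicit Defensive.
Import Order.TTheory GRing.Theory Num.Theory.
Local Open Scope ring_scope.

Definition penrose (R : realType) (n m : nat) (A : 'M[R]_(n, m)) (B : 'M[R]_(m, n)) : Prop :=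
  [/\ A *m B *m A = A, B *m A *m B = B, (A *m B)^T = A *m B & (B *m A)^T = B *m A].

Definition mp_pinv (R : realType) (n m : nat) (A : 'M[R]_(n, m)) : 'M[R]_(m, n) :=
  xget 0 (penrose A).

Definition theta_hat (R : realType) (n D m : nat) (X : 'M[R]_(n, D)) (Y : 'M[R]_(n, m))
  : 'M[R]_(D, m) := X^T *m mp_pinv (X *m X^T) *m Y.

From HB Require Import structures.
From mathcomp Require Import all_boot all_order all_algebra.
From mathcomp Require Import all_classical all_reals all_analysis.
From mathcomp Require Import lra.
Import Order.TTheory GRing.Theory Num.Theory numFieldTopology.Exports numFieldNormedType.Exports.

Set Implicit Arguments.
Unset Strict Implicit.
Unset Printing Implicit Defensive.

Local Open Scope classical_set_scope.
Local Open Scope ring_scope.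

(* Along the flow, (V, U1) solves the linear time-varying system
   V' = P U1, U1' = P^T V with P = E^T Sigma_x^{1/2}, hence so do V U2(0)^T
   and U1 U2(0)^T.  These start at 0, so a Gronwall argument on their squared
   Frobenius norm keeps them at 0 and, in the limit, V(oo) U2(0)^T = 0.  Thus
   U(oo) V(oo)^T = Phi1 U1(oo) V(oo)^T, and the equilibrium equation gives
   U1(oo) V(oo)^T = Sigma_x^{-1/2} W^T Y.  On the other side the compact SVD
   gives (X X^T)^+ = W Sigma_x^{-1} W^T, so X^T (X X^T)^+ Y is the same
   matrix Phi1 Sigma_x^{-1/2} W^T Y. *)

Section gronwall.
Context {R : realType}.
Implicit Types (f df : R -> R) (a b C t : R).

Lemma gronwall_itv_eq0 f df a b C : a <= b -> 0 <= C -> (b - a) * C < 1 ->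
  {within `[a, b], continuous f} ->
  (forall x, x \in `]a, b[ -> is_derive x 1 f (df x)) ->
  (forall x, x \in `]a, b[ -> df x <= C * f x) ->
  (forall x, 0 <= f x) -> f a = 0 ->
  forall s, s \in `[a, b] -> f s = 0.
Proof.
move=> ab C0 abC cf f_df df_le f_ge0 fa0.
(* At a maximiser c of f, the MVT on [a, c] gives f c <= C (b - a) f c. *)
have [c c_ab f_le_fc] := EVT_max ab cf.
suff fc0 : f c = 0 by move=> s s_ab; apply/le_anti; rewrite f_ge0 -fc0 f_le_fc.
move: c_ab; rewrite in_itv /= => /andP[+ cb]; rewrite le_eqVlt => /orP[/eqP<- //|ac].
have sub_oo : `]a, c[ `<=` `]a, b[ by apply: subset_itvl; rewrite bnd_simp.
have sub_cc : `[a, c] `<=` `[a, b] by apply: subset_itvl; rewrite bnd_simp.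
have [x /sub_oo x_ab] := MVT ac (fun x xac => f_df x (sub_oo _ xac))
  (continuous_subspaceW sub_cc cf).
rewrite fa0 subr0 => fcE.
have fx_le : f x <= f c by apply/f_le_fc/subset_itv_oo_cc.
have fc_le : f c <= C * f c * (b - a).
  rewrite {1}fcE (le_trans (ler_wpM2r _ (df_le x x_ab))) ?subr_ge0 ?(ltW ac) //.
  by rewrite -!mulrA ler_wpM2l // ler_pM ?f_ge0 ?subr_ge0 ?(ltW ac) //; lra.
by have := f_ge0 c; nra.
Qed.

Lemma gronwall_eq0 f df :
  {within [set t : R | 0 <= t], continuous f} ->
  (forall t, 0 < t -> is_derive t 1 f (df t)) ->
  (forall T : R, 0 < T ->
    exists2 C, 0 <= C & forall t, 0 < t <= T -> df t <= C * f t) ->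
  (forall t, 0 <= f t) -> f 0 = 0 ->
  forall t, 0 <= t -> f t = 0.
Proof.
move=> cf f_df df_le f_ge0 f00 t; rewrite le_eqVlt => /orP[/eqP<- //|t0].
have [C C0 dfC] := df_le t t0.
(* Cut [0, t] into N steps of length d with d * C < 1. *)
pose N := Num.bound (t * C); pose d := t / N%:R.
have tC0 : 0 <= t * C := mulr_ge0 (ltW t0) C0.
have tCN : t * C < N%:R by exact: archi_boundP.
have N0 : 0 < N%:R :> R := le_lt_trans tC0 tCN.
have d0 : 0 < d by rewrite divr_gt0.
have Nd : N%:R * d = t by rewrite mulrC divfK ?gt_eqF.
suff vanish k : (k <= N)%N -> forall s, 0 <= s <= k%:R * d -> f s = 0.
  by apply: (vanish N) => //; rewrite Nd ltW ?lexx.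
elim: k => [_ s|k IH kN s /andP[s0 sk]].
  by rewrite mul0r -eq_le => /eqP <-.
have [sk'|ks] := leP s (k%:R * d); first by apply: (IH (ltnW kN)); rewrite s0 sk'.
have kd0 : 0 <= k%:R * d by rewrite mulr_ge0 // ltW.
have kdt : k.+1%:R * d <= t by rewrite -Nd ler_wpM2r ?ler_nat // ltW.
have inside x : x \in `]k%:R * d, k.+1%:R * d[ -> 0 < x <= t.
  by rewrite in_itv /= => /andP[kx xk]; rewrite (le_lt_trans kd0) // (le_trans (ltW xk)).
apply: (@gronwall_itv_eq0 f df (k%:R * d) (k.+1%:R * d) C) => //.
- by rewrite ler_wpM2r ?ler_nat // ltW.
- have -> : k.+1%:R * d - k%:R * d = d by rewrite -natr1 mulrDl mul1r addrAC subrr add0r.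
  by rewrite /d mulrAC ltr_pdivrMr // mul1r.
- apply: continuous_subspaceW cf => x /=; rewrite in_itv /= => /andP[kx _].
  exact: le_trans kx.
- by move=> x /inside /andP[x0 _]; apply: f_df.
- by move=> x /inside; apply: dfC.
- by apply: (IH (ltnW kN)); rewrite kd0 lexx.
- by rewrite in_itv /= ltW ?sk.
Qed.
End gronwall.

Section entrywise.
Context {R : realType}.
Implicit Types (A B : set R) (t : R).

Definition mx_continuous_on A p q (F : R -> 'M[R]_(p, q)) :=
  forall i j, {within A, continuous (fun t => F t i j)}.

Lemma mx_continuous_on_within A p q (F : R -> 'M[R]_(p, q)) :
  {within A, continuous F} -> mx_continuous_on A F.
Proof.
by move=> cF i j x; exact: continuous_comp (cF x) (@coord_continuous _ _ _ i j (F x)).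
Qed.

Lemma mx_continuous_onS A B p q (F : R -> 'M[R]_(p, q)) :
  B `<=` A -> mx_continuous_on A F -> mx_continuous_on B F.
Proof. by move=> BA cF i j; exact: continuous_subspaceW BA (cF i j). Qed.

Lemma mx_continuous_on_cst A p q (M : 'M[R]_(p, q)) : mx_continuous_on A (fun=> M).
Proof. by move=> i j x; exact: cst_continuous. Qed.

Lemma mx_continuous_onB A p q (F G : R -> 'M[R]_(p, q)) :
  mx_continuous_on A F -> mx_continuous_on A G ->
  mx_continuous_on A (fun t => F t - G t).
Proof.
move=> cF cG i j; under eq_fun do rewrite !mxE.
by move=> x; apply: continuousB; [exact: cF|exact: cG].
Qed.

Lemma mx_continuous_onM A p q s (F : R -> 'M[R]_(p, q)) (G : R -> 'M[R]_(q, s)) :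
  mx_continuous_on A F -> mx_continuous_on A G ->
  mx_continuous_on A (fun t => F t *m G t).
Proof.
move=> cF cG i j; under eq_fun do rewrite mxE.
apply: continuous_big => [|k _ x]; first exact: add_continuous.
by apply: continuousM; [exact: cF|exact: cG].
Qed.

Lemma mx_continuous_on_tr A p q (F : R -> 'M[R]_(p, q)) :
  mx_continuous_on A F -> mx_continuous_on A (fun t => (F t)^T).
Proof. by move=> cF i j; under eq_fun do rewrite mxE; exact: cF. Qed.

Lemma mx_continuous_on_col A p1 p2 q (F : R -> 'M[R]_(p1, q)) (G : R -> 'M[R]_(p2, q)) :
  mx_continuous_on A F -> mx_continuous_on A G ->
  mx_continuous_on A (fun t => col_mx (F t) (G t)).
Proof.
move=> cF cG i j; under eq_fun do rewrite mxE.
by case: splitP => k _; [exact: cF|exact: cG].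
Qed.

Lemma mx_continuous_on_row A p q1 q2 (F : R -> 'M[R]_(p, q1)) (G : R -> 'M[R]_(p, q2)) :
  mx_continuous_on A F -> mx_continuous_on A G ->
  mx_continuous_on A (fun t => row_mx (F t) (G t)).
Proof.
move=> cF cG i j; under eq_fun do rewrite mxE.
by case: splitP => k _; [exact: cF|exact: cG].
Qed.

End entrywise.

Section entrywise_derive.
Context {R : realType}.
Implicit Types (t : R).

Definition mx_is_derive p q (F : R -> 'M[R]_(p, q)) t (dF : 'M[R]_(p, q)) :=
  forall i j, is_derive t 1 (fun s => F s i j) (dF i j).

Lemma is_derive_entrywise p q (F : R -> 'M[R]_(p, q)) t dF :
  is_derive t 1 F dF -> mx_is_derive F t dF.
Proof.
move=> dF_ i j; have F_t : derivable F t 1 by exact: ex_derive.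
have := derive_mx F_t; rewrite derive_val => ->; rewrite mxE.
by apply: derivableP; move/derivable_mxP: F_t; apply.
Qed.

Lemma mx_is_derive_mulmxr p q s (F : R -> 'M[R]_(p, q)) (N : 'M[R]_(q, s)) t dF :
  mx_is_derive F t dF -> mx_is_derive (fun u => F u *m N) t (dF *m N).
Proof.
move=> dF_ i j; under eq_fun do rewrite mxE; rewrite mxE.
rewrite -[X in is_derive _ _ X _]/(fun u => \sum_k (fun u => F u i k * N k j) u).
rewrite -fct_sumE; apply: is_derive_sum => k.
apply: is_derive_eq; first exact: is_deriveM (dF_ i k) (is_derive_cst (N k j) t 1).
by rewrite scaler0 add0r /GRing.scale /= mulrC.
Qed.

Lemma mx_is_derive_col p1 p2 q (F : R -> 'M[R]_(p1, q)) (G : R -> 'M[R]_(p2, q))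
    t dF dG :
  mx_is_derive F t dF -> mx_is_derive G t dG ->
  mx_is_derive (fun u => col_mx (F u) (G u)) t (col_mx dF dG).
Proof.
move=> dF_ dG_ i j; under eq_fun do rewrite mxE; rewrite mxE.
by case: splitP => k _; [exact: dF_|exact: dG_].
Qed.

End entrywise_derive.

Section frobenius.
Context {R : realType}.

Lemma entry_le_sum2 p q (g : 'I_p -> 'I_q -> R) i j :
  (forall i j, 0 <= g i j) -> g i j <= \sum_i \sum_j g i j.
Proof.
move=> g_ge0; rewrite (bigD1 i) //= (bigD1 j) //= -addrA lerDl.
by rewrite addr_ge0 ?sumr_ge0 // => *; rewrite ?sumr_ge0.
Qed.

Definition mx_sqnorm p q (M : 'M[R]_(p, q)) : R := \sum_i \sum_j M i j ^+ 2.

Lemma mx_sqnorm_ge0 p q (M : 'M[R]_(p, q)) : 0 <= mx_sqnorm M.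
Proof. by rewrite !sumr_ge0 // => i _; rewrite sumr_ge0 // => j _; rewrite sqr_ge0. Qed.

Lemma sqr_entry_le_mx_sqnorm p q (M : 'M[R]_(p, q)) i j : M i j ^+ 2 <= mx_sqnorm M.
Proof. by apply: entry_le_sum2 => *; rewrite sqr_ge0. Qed.

Lemma mx_sqnorm_eq0 p q (M : 'M[R]_(p, q)) : (mx_sqnorm M == 0) = (M == 0).
Proof.
apply/eqP/eqP => [M0|->].
  apply/matrixP => i j; apply/eqP; rewrite mxE -sqrf_eq0 eq_le sqr_ge0 andbT -M0.
  exact: sqr_entry_le_mx_sqnorm.
by rewrite /mx_sqnorm big1 // => i _; rewrite big1 // => j _; rewrite mxE expr0n.
Qed.

Lemma mx_continuous_on_sqnorm (A : set R) p q (F : R -> 'M[R]_(p, q)) :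
  mx_continuous_on A F -> {within A, continuous (fun t => mx_sqnorm (F t))}.
Proof.
move=> cF; apply: continuous_big => [|i _]; first exact: add_continuous.
apply: continuous_big => [|j _ x]; first exact: add_continuous.
by under eq_fun do rewrite expr2; apply: continuousM; exact: cF.
Qed.

Lemma is_derive_mx_sqnorm p q (F : R -> 'M[R]_(p, q)) t dF : mx_is_derive F t dF ->
  is_derive t 1 (fun s => mx_sqnorm (F s)) (2 * \sum_i \sum_j F t i j * dF i j).
Proof.
move=> dF_; rewrite /mx_sqnorm mulr_sumr.
rewrite -[X in is_derive _ _ X _]/(fun s => \sum_i (fun s => \sum_j F s i j ^+ 2) s).
rewrite -fct_sumE; apply: is_derive_sum => i; rewrite mulr_sumr.
rewrite -[X in is_derive _ _ X _]/(fun s => \sum_j (fun s => F s i j ^+ 2) s).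
rewrite -fct_sumE; apply: is_derive_sum => j.
apply: is_derive_eq; first exact: (is_deriveX 2 (dF_ i j)).
by rewrite mulrA.
Qed.

Lemma sum_mulmx_le_sqnorm p q (M : 'M[R]_p) (Z : 'M[R]_(p, q)) C :
  (forall i k, `|M i k| <= C) ->
  \sum_i \sum_j Z i j * (M *m Z) i j <= (p * q * p)%:R * C * mx_sqnorm Z.
Proof.
move=> MC; set S := mx_sqnorm Z.
have term i j k : Z i j * (M i k * Z k j) <= C * S.
  have ZZ_le : `|Z i j| * `|Z k j| <= S.
    have := sqr_entry_le_mx_sqnorm Z i j; have := sqr_entry_le_mx_sqnorm Z k j.
    have := sqr_ge0 (`|Z i j| - `|Z k j|).
    rewrite sqrrB !real_normK ?num_real // -/S mulr2n.
    set a := _ * _; set x := Z i j ^+ 2; set y := Z k j ^+ 2; lra.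
  rewrite (le_trans (ler_norm _)) // !normrM mulrCA.
  by rewrite ler_pM // mulr_ge0.
apply: (@le_trans _ _ (\sum_(i < p) \sum_(j < q) \sum_(k < p) C * S)).
  apply: ler_sum => i _; apply: ler_sum => j _.
  by rewrite mxE mulr_sumr; apply: ler_sum => k _; exact: term.
by rewrite !sumr_const !card_ord -!mulrnA -mulrA mulr_natl mulnA.
Qed.
End frobenius.

Section linear_ode.
Context {R : realType}.
Local Notation Rge0 := [set t : R | 0 <= t].

Lemma mx_continuous_on_bounded (a b : R) p q (F : R -> 'M[R]_(p, q)) :
  a <= b -> mx_continuous_on `[a, b] F ->
  exists2 C, 0 <= C & forall t, t \in `[a, b] -> forall i j, `|F t i j| <= C.
Proof.
move=> ab cF; pose g t := \sum_i \sum_j `|F t i j|.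
have cg : {within `[a, b], continuous g}.
  apply: continuous_big => [|i _]; first exact: add_continuous.
  apply: continuous_big => [|j _ x]; first exact: add_continuous.
  exact: continuous_comp (cF i j x) (@norm_continuous _ _ _).
have [c _ g_le] := EVT_max ab cg.
exists (g c) => [|t t_ab i j].
  by apply: sumr_ge0 => i _; apply: sumr_ge0.
by rewrite (le_trans _ (g_le t t_ab)) // entry_le_sum2.
Qed.

Lemma linear_ode_eq0 p q (M : R -> 'M[R]_p) (Z : R -> 'M[R]_(p, q)) :
  mx_continuous_on Rge0 M -> mx_continuous_on Rge0 Z ->
  (forall t, 0 < t -> mx_is_derive Z t (M t *m Z t)) -> Z 0 = 0 ->
  forall t, 0 <= t -> Z t = 0.
Proof.
move=> cM cZ dZ Z00 t t0; apply/eqP; rewrite -mx_sqnorm_eq0; apply/eqP; move: t t0.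
apply: (gronwall_eq0 (df := fun s => 2 * \sum_i \sum_j Z s i j * (M s *m Z s) i j)).
- exact: mx_continuous_on_sqnorm.
- by move=> s s0; apply/is_derive_mx_sqnorm/dZ.
- move=> T T0; have sub : `[0, T] `<=` Rge0 by move=> x; rewrite /= in_itv => /andP[].
  have [C C0 MC] := mx_continuous_on_bounded (ltW T0) (mx_continuous_onS sub cM).
  exists (2 * ((p * q * p)%:R * C)) => [|s /andP[s0 sT]]; first by rewrite !mulr_ge0.
  rewrite -mulrA ler_wpM2l // sum_mulmx_le_sqnorm // => i k.
  by apply: MC; rewrite in_itv /= ltW.
- by move=> s; exact: mx_sqnorm_ge0.
- by apply/eqP; rewrite Z00 mx_sqnorm_eq0.
Qed.

Lemma coupled_linear_ode_mulmx_eq0 m r h k (P : R -> 'M[R]_(m, r))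
    (Q : R -> 'M[R]_(r, m)) (V : R -> 'M[R]_(m, h)) (U : R -> 'M[R]_(r, h))
    (N : 'M[R]_(h, k)) :
  mx_continuous_on Rge0 P -> mx_continuous_on Rge0 Q ->
  mx_continuous_on Rge0 V -> mx_continuous_on Rge0 U ->
  (forall t, 0 < t -> mx_is_derive V t (P t *m U t)) ->
  (forall t, 0 < t -> mx_is_derive U t (Q t *m V t)) ->
  V 0 *m N = 0 -> U 0 *m N = 0 -> forall t, 0 <= t -> V t *m N = 0.
Proof.
move=> cP cQ cV cU dV dU V0 U0 t t0.
pose Z s := col_mx (V s) (U s) *m N.
have : Z t = 0.
  apply: (@linear_ode_eq0 _ _ (fun s => block_mx 0 (P s) (Q s) 0) Z) t0.
  - by apply: mx_continuous_on_col; apply: mx_continuous_on_row => //;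
      exact: mx_continuous_on_cst.
  - exact/mx_continuous_onM/mx_continuous_on_cst/mx_continuous_on_col.
  - move=> s s0; rewrite /Z mulmxA mul_block_col !mul0mx add0r addr0.
    by apply: mx_is_derive_mulmxr; apply: mx_is_derive_col; [exact: dV|exact: dU].
  - by rewrite /Z mul_col_mx V0 U0 col_mx0.
by rewrite /Z mul_col_mx => /eqP; rewrite col_mx_eq0 => /andP[/eqP].
Qed.

End linear_ode.

Lemma cvg_mulmx_eq0 {R : realType} {T : Type} (F : set_system T)
    {FF : ProperFilter F} m h k (V : T -> 'M[R]_(m, h)) (L : 'M[R]_(m, h)) (N : 'M[R]_(h, k)) :
  V x @[x --> F] --> L -> (\forall x \near F, V x *m N = 0) -> L *m N = 0.
Proof.
move=> VL VN0; apply/matrixP => i j; rewrite [RHS]mxE.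
have VN_L : (V x *m N) i j @[x --> F] --> (L *m N) i j.
  under eq_fun do rewrite mxE; rewrite mxE.
  apply: cvg_big => [|l _]; first exact: add_continuous.
  apply: cvgM; last exact: cvg_cst.
  exact: (continuous_cvg _ (@coord_continuous _ _ _ i l L)).
have VN_0 : (V x *m N) i j @[x --> F] --> (0 : R).
  by apply: cvg_near_cst; apply: filterS VN0 => x ->; rewrite mxE.
exact: cvg_unique _ VN_L VN_0.
Qed.

Section pseudoinverse.
Context {R : realType}.

Lemma penrose_uniq n m (A : 'M[R]_(n, m)) B1 B2 :
  penrose A B1 -> penrose A B2 -> B1 = B2.
Proof.
move=> [ABA1 BAB1 AB1T BA1T] [ABA2 BAB2 AB2T BA2T].
have AT2 : A^T = A^T *m A *m B2 by rewrite -{1}ABA2 trmx_mul AB2T mulmxA.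
have AT1 : A^T = B1 *m A *m A^T by rewrite -{1}ABA1 -mulmxA trmx_mul BA1T.
have -> : B1 = B1 *m A *m B2.
  transitivity (B1 *m B1^T *m A^T); first by rewrite -mulmxA -trmx_mul AB1T mulmxA BAB1.
  transitivity (B1 *m B1^T *m (A^T *m A *m B2)); first by rewrite -AT2.
  by rewrite !mulmxA -(mulmxA B1 B1^T) -trmx_mul AB1T mulmxA BAB1.
symmetry; transitivity ((B2 *m A)^T *m B2); first by rewrite BA2T BAB2.
transitivity (B1 *m A *m A^T *m B2^T *m B2); first by rewrite -AT1 -trmx_mul.
by rewrite -(mulmxA _ A^T) -trmx_mul BA2T -!mulmxA [B2 *m (A *m B2)]mulmxA BAB2.
Qed.

Lemma mp_pinvE n m (A : 'M[R]_(n, m)) B : penrose A B -> mp_pinv A = B.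
Proof. by move=> AB; apply: (penrose_uniq _ AB); apply: xgetPex; exists B. Qed.

Lemma penrose_conjmx n r (W : 'M[R]_(n, r)) (S : 'M[R]_r) :
  W^T *m W = 1%:M -> S \in unitmx ->
  penrose (W *m S *m W^T) (W *m invmx S *m W^T).
Proof.
move=> WTW Su; have WTWK p (M : 'M[R]_(r, p)) : W^T *m (W *m M) = M.
  by rewrite mulmxA WTW mul1mx.
have AB : W *m S *m W^T *m (W *m invmx S *m W^T) = W *m W^T.
  by rewrite -!mulmxA WTWK mulKVmx.
have BA : W *m invmx S *m W^T *m (W *m S *m W^T) = W *m W^T.
  by rewrite -!mulmxA WTWK mulKmx.
have WWT_sym : (W *m W^T)^T = W *m W^T by rewrite trmx_mul trmxK.
by split; rewrite ?AB ?BA // -!mulmxA WTWK.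
Qed.

Lemma theta_hat_svd n D m r (X : 'M[R]_(n, D)) (Y : 'M[R]_(n, m))
    (W : 'M[R]_(n, r)) (S : 'M[R]_r) (Phi : 'M[R]_(D, r)) :
  W^T *m W = 1%:M -> Phi^T *m Phi = 1%:M -> S \in unitmx ->
  X = W *m S *m Phi^T -> theta_hat X Y = Phi *m invmx S *m W^T *m Y.
Proof.
move=> WTW PTP Su ->.
have XXT : W *m S *m Phi^T *m (W *m S *m Phi^T)^T = W *m (S *m S^T) *m W^T.
  by rewrite !trmx_mul trmxK -!mulmxA (mulmxA Phi^T) PTP mul1mx.
have SSTu : S *m S^T \in unitmx by rewrite unitmx_mul unitmx_tr Su.
have STK : S^T *m invmx (S *m S^T) = invmx S.
  by rewrite -{1}[S^T](mulKmx Su) -mulmxA mulmxV // mulmx1.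
rewrite /theta_hat XXT (mp_pinvE (penrose_conjmx WTW SSTu)).
by rewrite !trmx_mul trmxK -!mulmxA (mulmxA W^T) WTW mul1mx (mulmxA S^T) STK.
Qed.

Lemma theta_hat_block_svd n D m r (X : 'M[R]_(n, D)) (Y : 'M[R]_(n, m))
    (W : 'M[R]_(n, r)) (S : 'M[R]_r) (Phi1 : 'M[R]_(D, r)) (Phi2 : 'M[R]_(D, D - r)) :
  W^T *m W = 1%:M -> (row_mx Phi1 Phi2)^T *m row_mx Phi1 Phi2 = 1%:M ->
  S \in unitmx -> X = W *m row_mx S 0 *m col_mx Phi1^T Phi2^T ->
  theta_hat X Y = Phi1 *m invmx S *m W^T *m Y.
Proof.
move=> WTW PTP Su defX; apply: theta_hat_svd => //.
  by move: PTP; rewrite tr_row_mx mul_col_row scalar_mx_block => /eq_block_mx[].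
by rewrite defX -mulmxA mul_row_col mul0mx addr0 mulmxA.
Qed.

End pseudoinverse.

Lemma unitmx_diag (R : fieldType) n (d : 'rV[R]_n) :
  (forall i, d 0 i != 0) -> diag_mx d \in unitmx.
Proof. by move=> d_neq0; rewrite unitmxE det_diag unitfE; apply/prodf_neq0 => i _. Qed.

Theorem proposition1 (R : realType) (n D m h r : nat)
  (X : 'M[R]_(n, D)) (Y : 'M[R]_(n, m))
  (W : 'M[R]_(n, r)) (sx : 'rV[R]_r)
  (Phi1 : 'M[R]_(D, r)) (Phi2 : 'M[R]_(D, D - r))
  (V : R -> 'M[R]_(m, h)) (U1 : R -> 'M[R]_(r, h)) (U2 : R -> 'M[R]_(D - r, h))
  (Vinf : 'M[R]_(m, h)) (U1inf : 'M[R]_(r, h)) :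
  (n < D)%N -> r = \rank X -> (minn m D <= h)%N -> (0 < h)%N ->
  (* compact SVD  X = W [Sigma_x^{1/2} 0] [Phi1 Phi2]^T *)
  W^T *m W = 1%:M ->
  (forall i, 0 < sx 0 i) ->
  let Sh := diag_mx (map_mx Num.sqrt sx) in
  (row_mx Phi1 Phi2)^T *m row_mx Phi1 Phi2 = 1%:M ->
  row_mx Phi1 Phi2 *m (row_mx Phi1 Phi2)^T = 1%:M ->
  X = W *m row_mx Sh (0 : 'M[R]_(r, D - r)) *m col_mx Phi1^T Phi2^T ->
  let E (Va : 'M[R]_(m, h)) (Ua : 'M[R]_(r, h)) : 'M[R]_(r, m) :=
    W^T *m Y - Sh *m Ua *m Va^T in
  (* the gradient-flow dynamics on t >= 0 *)
  {within [set t : R | 0 <= t], continuous V} ->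
  {within [set t : R | 0 <= t], continuous U1} ->
  {within [set t : R | 0 <= t], continuous U2} ->
  (forall t : R, 0 < t -> is_derive t (1 : R) V ((E (V t) (U1 t))^T *m Sh *m U1 t)) ->
  (forall t : R, 0 < t -> is_derive t (1 : R) U1 (Sh *m E (V t) (U1 t) *m V t)) ->
  (forall t : R, 0 < t -> is_derive t (1 : R) U2 0) ->
  (* convergence to an equilibrium *)
  V t @[t --> +oo] --> Vinf ->
  U1 t @[t --> +oo] --> U1inf ->
  E Vinf U1inf = 0 ->
  (* initialization *)
  V 0 *m (U2 0)^T = 0 ->
  U1 0 *m (U2 0)^T = 0 ->
  let Uinf := Phi1 *m U1inf + Phi2 *m U2 0 in
  Uinf *m Vinf^T = theta_hat X Y.
Proof.
move=> _ _ _ _ WTW sx_gt0 Sh PTP _ defX E cV cU1 _ dV dU1 _ lV lU1 E0 V0N U10N Uinf.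
have Sh_unit : Sh \in unitmx.
  by apply: unitmx_diag => i; rewrite mxE gt_eqF ?sqrtr_gt0.
have cV' := mx_continuous_on_within cV.
have cU1' := mx_continuous_on_within cU1.
pose P t := (E (V t) (U1 t))^T *m Sh.
have cP : mx_continuous_on [set t | 0 <= t] P.
  apply: mx_continuous_onM; last exact: mx_continuous_on_cst.
  apply: mx_continuous_on_tr; apply: mx_continuous_onB; first exact: mx_continuous_on_cst.
  apply: mx_continuous_onM; last exact: mx_continuous_on_tr.
  by apply: mx_continuous_onM; first exact: mx_continuous_on_cst.
have VN0 : forall t, 0 <= t -> V t *m (U2 0)^T = 0.
  apply: (coupled_linear_ode_mulmx_eq0 cP (mx_continuous_on_tr cP) cV' cU1') => //.
  - by move=> t t0; apply: is_derive_entrywise; exact: dV.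
  - move=> t t0; rewrite trmx_mul trmxK tr_diag_mx.
    by apply: is_derive_entrywise; exact: dU1.
have VinfN0 : Vinf *m (U2 0)^T = 0.
  apply: (cvg_mulmx_eq0 lV); exists 0; split => [|t t0]; first exact: real0.
  by apply: VN0; rewrite ltW.
have U1V : U1inf *m Vinf^T = invmx Sh *m (W^T *m Y).
  by move/eqP: E0; rewrite subr_eq0 => /eqP ->; rewrite -mulmxA mulKmx.
have U2V : U2 0 *m Vinf^T = 0 by rewrite -[U2 0]trmxK -trmx_mul VinfN0 trmx0.
rewrite (theta_hat_block_svd Y WTW PTP Sh_unit defX) /Uinf mulmxDl.
by rewrite -!mulmxA U1V U2V mulmx0 addr0.
Qed.
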